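(* (1) For every Priestley space $X$, the lattices $\Phi(\mathcal{E}(X))$ and $\mathcal{E}(X\times \underline{2})$ are isomorphic as bounded lattices. (2) For every bounded distributive lattice $L$, the Priestley spaces $\mathcal{X}(\Phi(L))$ and $\mathcal{X}(L)\times\underline{2}$ are isomorphic in the category of Priestley spaces (i.e. there is an order-isomorphism that is a homeomorphism).
   Context: A Priestley space is a poset $(X,\le)$ with a compact topology such that whenever $x\not\ge y$ there is a clopen down-set $U$ with $x\in U$, $y\notin U$. $\mathcal{E}(X)$ is the bounded distributive lattice of clopen down-sets of $X$ ordered by inclusion. For a bounded distributive lattice $L$, $\mathcal{X}(L)$ is the set of prime ideals of $L$ ordered by inclusion, with topology generated by the sets $X_a=\{I: a\notin I\}$ and their complements, $a\in L$. $\underline{2}$ is the two-element chain $\{0<1\}$ with the discrete topology; products of Priestley spaces carry the product topology and coordinatewise order. For a lattice $L$, $\Phi(L)=\{(a,b)\in L\times L: a\le b\}$ with coordinatewise order, a $(0,1)$-sublattice of $L\times L$. Priestley duality: $L\cong\mathcal{E}(\mathcal{X}(L))$ and $X\cong\mathcal{X}(\mathcal{E}(X))$ naturally. *)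

From Stdlib Require Import List Classical FunctionalExtensionality
  PropExtensionality ProofIrrelevance.
Import ListNotations.
Set Implicit Arguments.

Record OTS := {
  pt :> Type;
  ole : pt -> pt -> Prop;
  open : (pt -> Prop) -> Prop;
  open_full : open (fun _ => True);
  open_union : forall F : (pt -> Prop) -> Prop,
      (forall U, F U -> open U) -> open (fun x => exists U, F U /\ U x);
  open_inter : forall U V, open U -> open V -> open (fun x => U x /\ V x)
}.
Arguments ole {_} _ _.
Arguments open {_} _.

Definition clopen {X : OTS} (U : X -> Prop) :=
  open U /\ open (fun x => ~ U x).

Definition down_set {X : OTS} (U : X -> Prop) :=
  forall x y, ole x y -> U y -> U x.

Definition clopen_down {X : OTS} (U : X -> Prop) :=
  clopen U /\ down_set U.

Definition compact (X : OTS) :=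
  forall F : (X -> Prop) -> Prop,
    (forall U, F U -> open U) -> (forall x, exists U, F U /\ U x) ->
    exists l : list (X -> Prop), Forall F l /\ (forall x, exists U, In U l /\ U x).

Definition partial_order (X : OTS) :=
  (forall x : X, ole x x) /\
  (forall x y z : X, ole x y -> ole y z -> ole x z) /\
  (forall x y : X, ole x y -> ole y x -> x = y).

Definition priestley (X : OTS) :=
  partial_order X /\ compact X /\
  forall x y : X, ~ ole y x ->
    exists U, clopen_down U /\ U x /\ ~ U y.

Definition gen_open (T : Type) (S : (T -> Prop) -> Prop) (U : T -> Prop) :=
  forall x, U x -> exists l : list (T -> Prop),
    Forall S l /\ (forall V, In V l -> V x) /\
    (forall y, (forall V, In V l -> V y) -> U y).

Lemma gen_open_full T S : @gen_open T S (fun _ => True).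
Proof. intros x _; exists nil; repeat split; auto; intros V H; destruct H. Qed.

Lemma gen_open_union T S : forall F : (T -> Prop) -> Prop,
  (forall U, F U -> gen_open S U) -> gen_open S (fun x => exists U, F U /\ U x).
Proof.
  intros F HF x [U [HU Ux]].
  destruct (HF U HU x Ux) as [l [H1 [H2 H3]]].
  exists l; repeat split; auto.
  intros y Hy; exists U; split; auto.
Qed.

Lemma gen_open_inter T S U V :
  @gen_open T S U -> gen_open S V -> gen_open S (fun x => U x /\ V x).
Proof.
  intros HU HV x [Ux Vx].
  destruct (HU x Ux) as [l1 [A1 [B1 C1]]].
  destruct (HV x Vx) as [l2 [A2 [B2 C2]]].
  exists (l1 ++ l2); split; [|split].
  - apply Forall_app; split; auto.
  - intros W HW; apply in_app_or in HW; destruct HW as [HW|HW]; [apply B1|apply B2]; exact HW.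
  - intros y H; split.
    + apply C1; intros W HW; apply H; apply in_or_app; auto.
    + apply C2; intros W HW; apply H; apply in_or_app; auto.
Qed.

Definition gen_OTS (T : Type) (le : T -> T -> Prop) (S : (T -> Prop) -> Prop) : OTS :=
  {| pt := T; ole := le; open := gen_open S;
     open_full := gen_open_full S;
     open_union := @gen_open_union T S;
     open_inter := @gen_open_inter T S |}.

Definition prod_OTS (X Y : OTS) : OTS :=
  gen_OTS (fun p q : X * Y => ole (fst p) (fst q) /\ ole (snd p) (snd q))
    (fun W => (exists U : X -> Prop, open U /\ W = fun p => U (fst p)) \/
              (exists V : Y -> Prop, open V /\ W = fun p => V (snd p))).

(* The two-element chain 0 < 1 (false < true) with the discrete topology. *)
Definition two : OTS :=
  {| pt := bool; ole := fun b c => b = true -> c = true;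
     open := fun _ => True;
     open_full := I;
     open_union := fun _ _ => I;
     open_inter := fun _ _ _ _ => I |}.

Definition ots_iso (X Y : OTS) :=
  exists (f : X -> Y) (g : Y -> X),
    (forall x, g (f x) = x) /\ (forall y, f (g y) = y) /\
    (forall x x', ole x x' <-> ole (f x) (f x')) /\
    (forall U : X -> Prop, open U <-> open (fun y => U (g y))).

Record BDL := {
  car :> Type;
  meet : car -> car -> car;
  join : car -> car -> car;
  bot : car;
  top : car;
  meetC : forall a b, meet a b = meet b a;
  joinC : forall a b, join a b = join b a;
  meetA : forall a b c, meet a (meet b c) = meet (meet a b) c;
  joinA : forall a b c, join a (join b c) = join (join a b) c;
  absorb1 : forall a b, meet a (join a b) = a;
  absorb2 : forall a b, join a (meet a b) = a;
  distr : forall a b c, meet a (join b c) = join (meet a b) (meet a c);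
  meet_top : forall a, meet a top = a;
  join_bot : forall a, join a bot = a
}.
Arguments meet {_} _ _.
Arguments join {_} _ _.
Arguments bot {_}.
Arguments top {_}.
Arguments meetC {_} _ _.
Arguments joinC {_} _ _.
Arguments meetA {_} _ _ _.
Arguments joinA {_} _ _ _.
Arguments absorb1 {_} _ _.
Arguments absorb2 {_} _ _.
Arguments distr {_} _ _ _.
Arguments meet_top {_} _.
Arguments join_bot {_} _.

Definition bleq {L : BDL} (a b : L) := meet a b = a.

Definition bl_iso (L M : BDL) :=
  exists (f : L -> M) (g : M -> L),
    (forall x, g (f x) = x) /\ (forall y, f (g y) = y) /\
    (forall a b, f (meet a b) = meet (f a) (f b)) /\
    (forall a b, f (join a b) = join (f a) (f b)) /\
    f bot = bot /\ f top = top.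

Lemma sig_pred_eq (X : Type) (P : (X -> Prop) -> Prop) (a b : {U | P U}) :
  (forall x, proj1_sig a x <-> proj1_sig b x) -> a = b.
Proof.
  destruct a as [A HA], b as [B HB]; simpl; intros H.
  assert (A = B) by (apply functional_extensionality; intro x;
                     apply propositional_extensionality; auto).
  subst; f_equal; apply proof_irrelevance.
Qed.

Lemma open_empty (X : OTS) : @open X (fun _ => False).
Proof.
  assert (H := @open_union X (fun _ => False) (fun U (h : False) => match h with end)).
  replace (fun _ : X => False) with (fun x : X => exists U : X -> Prop, False /\ U x);
    auto.
  apply functional_extensionality; intro x; apply propositional_extensionality.
  split; [intros [U [[] _]] | intros []].
Qed.

Lemma open_ext (X : OTS) (U V : X -> Prop) :
  (forall x, U x <-> V x) -> open U -> open V.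
Proof.
  intros H HU; replace V with U; auto.
  apply functional_extensionality; intro; apply propositional_extensionality; auto.
Qed.

Lemma open_bunion (X : OTS) (U V : X -> Prop) :
  open U -> open V -> open (fun x => U x \/ V x).
Proof.
  intros HU HV.
  apply (@open_ext X (fun x => exists W, (W = U \/ W = V) /\ W x)).
  - intro x; split.
    + intros [W [[-> | ->] HW]]; auto.
    + intros [H|H]; [exists U | exists V]; auto.
  - apply open_union; intros W [-> | ->]; auto.
Qed.

Section EX.
Variable X : OTS.
Definition ECar := {U : X -> Prop | clopen_down U}.

Definition Emeet (a b : ECar) : ECar.
Proof.
  exists (fun x => proj1_sig a x /\ proj1_sig b x).
  destruct a as [A [[A1 A2] A3]], b as [B [[B1 B2] B3]]; simpl.
  split; [split|].
  - apply open_inter; auto.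
  - apply (@open_ext X (fun x => ~ A x \/ ~ B x)).
    + intro x; tauto.
    + apply open_bunion; auto.
  - intros x y Hxy [Ay By]; split; eauto.
Defined.

Definition Ejoin (a b : ECar) : ECar.
Proof.
  exists (fun x => proj1_sig a x \/ proj1_sig b x).
  destruct a as [A [[A1 A2] A3]], b as [B [[B1 B2] B3]]; simpl.
  split; [split|].
  - apply open_bunion; auto.
  - apply (@open_ext X (fun x => ~ A x /\ ~ B x)).
    + intro x; tauto.
    + apply open_inter; auto.
  - intros x y Hxy [Ay | By]; eauto.
Defined.

Definition Ebot : ECar.
Proof.
  exists (fun _ => False); split; [split|].
  - apply open_empty.
  - apply (@open_ext X (fun _ => True)); [tauto | apply open_full].
  - intros x y _ H; exact H.
Defined.

Definition Etop : ECar.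
Proof.
  exists (fun _ => True); split; [split|].
  - apply open_full.
  - apply (@open_ext X (fun _ => False)); [tauto | apply open_empty].
  - intros x y _ H; exact H.
Defined.

Ltac Esolve := intros; apply sig_pred_eq; simpl; intros; tauto.

Definition E : BDL.
Proof.
  refine {| car := ECar; meet := Emeet; join := Ejoin; bot := Ebot; top := Etop |};
  Esolve.
Defined.
End EX.

Section Phi.
Variable L : BDL.

Lemma meet_idem (a : L) : meet a a = a.
Proof.
  transitivity (meet a (join a (meet a a))).
  - f_equal; symmetry; apply absorb2.
  - apply absorb1.
Qed.

Lemma bleq_join (a b : L) : bleq a b -> join a b = b.
Proof.
  unfold bleq; intro H; rewrite <- H, joinC, meetC; apply absorb2.
Qed.

Lemma join_bleq (a b : L) : join a b = b -> bleq a b.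
Proof. unfold bleq; intro H; rewrite <- H; apply absorb1. Qed.

Lemma meet4 (a b c d : L) : meet (meet a b) (meet c d) = meet (meet a c) (meet b d).
Proof.
  rewrite <- (meetA a b), (meetA b c d), (meetC b c), <- (meetA c b d), meetA.
  reflexivity.
Qed.

Lemma join4 (a b c d : L) : join (join a b) (join c d) = join (join a c) (join b d).
Proof.
  rewrite <- (joinA a b), (joinA b c d), (joinC b c), <- (joinA c b d), joinA.
  reflexivity.
Qed.

Definition PCar := {p : L * L | bleq (fst p) (snd p)}.

Lemma phi_eq (a b : PCar) : proj1_sig a = proj1_sig b -> a = b.
Proof.
  destruct a, b; simpl; intros; subst; f_equal; apply proof_irrelevance.
Qed.

Definition Pmeet (a b : PCar) : PCar.
Proof.
  exists (meet (fst (proj1_sig a)) (fst (proj1_sig b)),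
          meet (snd (proj1_sig a)) (snd (proj1_sig b))).
  destruct a as [[a1 a2] Ha], b as [[b1 b2] Hb]; unfold bleq in *; simpl in *.
  rewrite meet4, Ha, Hb; reflexivity.
Defined.

Definition Pjoin (a b : PCar) : PCar.
Proof.
  exists (join (fst (proj1_sig a)) (fst (proj1_sig b)),
          join (snd (proj1_sig a)) (snd (proj1_sig b))).
  destruct a as [[a1 a2] Ha], b as [[b1 b2] Hb]; simpl in *.
  apply join_bleq; rewrite join4, (bleq_join Ha), (bleq_join Hb); reflexivity.
Defined.

Definition Pbot : PCar := exist _ (bot, bot) (meet_idem bot).
Definition Ptop : PCar := exist _ (top, top) (meet_idem top).

Ltac Psolve l :=
  intros; apply phi_eq;
  repeat match goal with p : PCar |- _ => destruct p as [[? ?] ?] end;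
  simpl; f_equal; apply l.

Definition Phi : BDL.
Proof.
  refine {| car := PCar; meet := Pmeet; join := Pjoin; bot := Pbot; top := Ptop |}.
  - Psolve (@meetC L).
  - Psolve (@joinC L).
  - Psolve (@meetA L).
  - Psolve (@joinA L).
  - Psolve (@absorb1 L).
  - Psolve (@absorb2 L).
  - Psolve (@distr L).
  - Psolve (@meet_top L).
  - Psolve (@join_bot L).
Defined.
End Phi.

Definition prime_ideal {L : BDL} (I : L -> Prop) :=
  I bot /\
  (forall a b, bleq a b -> I b -> I a) /\
  (forall a b, I a -> I b -> I (join a b)) /\
  ~ I top /\
  (forall a b, I (meet a b) -> I a \/ I b).

Definition Xspec (L : BDL) : OTS :=
  gen_OTS (fun I J : {I : L -> Prop | prime_ideal I} =>
             forall a, proj1_sig I a -> proj1_sig J a)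
    (fun W => exists a : L,
        W = (fun I => ~ proj1_sig I a) \/ W = (fun I => proj1_sig I a)).

From Stdlib Require Import List Classical ClassicalDescription.
Import ListNotations.

(* Both isomorphisms come from viewing a subset of X x 2 as the pair of its
   slices over 1 and over 0.  A clopen down-set U of X x 2 is the same as a
   pair (U_1, U_0) of clopen down-sets of X with U_1 <= U_0 (the inclusion is
   down-closure along (x,0) <= (x,1)), i.e. an element of Phi(E(X)); the
   lattice operations are computed slice by slice.  Dually, every prime ideal
   P of Phi(L) is a "projection" {(a,b) | a in I} or {(a,b) | b in I} of a
   prime ideal I of L: I is the diagonal {a | (a,a) in P}, and which
   projection occurs is decided by whether (0,1) lies in P. *)

Definition continuous (Y Z : OTS) (h : Y -> Z) : Prop :=
  forall U : Z -> Prop, open U -> open (fun y => U (h y)).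

Lemma open_const (Y : OTS) (Q : Prop) : @open Y (fun _ => Q).
Proof.
  destruct (classic Q) as [HQ | HQ].
  - apply (@open_ext Y (fun _ => True)); [tauto | apply open_full].
  - apply (@open_ext Y (fun _ => False)); [tauto | apply open_empty].
Qed.

Lemma open_finite_inter (Y : OTS) (T : Type) (P : T -> Prop) (k : T -> Y -> Prop) :
  (forall W, P W -> open (k W)) ->
  forall l, Forall P l -> open (fun y => forall W, In W l -> k W y).
Proof.
  intros Hk l; induction l as [|W l IH]; intros Hl.
  - apply (@open_ext Y (fun _ => True));
      [intros; split; [intros _ V [] | auto] | apply open_full].
  - inversion Hl as [|? ? HW Hl']; subst.
    apply (@open_ext Y (fun y => k W y /\ (forall V, In V l -> k V y))).
    + intros y; split.
      * intros [H1 H2] V [<- | HV]; auto.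
      * intros H; split; [apply H; left | intros V HV; apply H; right]; auto.
    + apply open_inter; auto.
Qed.

Lemma gen_open_preimage (Y : OTS) (T : Type) (S : (T -> Prop) -> Prop) (h : Y -> T) :
  (forall W, S W -> open (fun y => W (h y))) ->
  forall U, gen_open S U -> open (fun y => U (h y)).
Proof.
  intros HS U HU.
  apply (@open_ext Y (fun y => exists V, (exists l, Forall S l /\
      (forall t, (forall W, In W l -> W t) -> U t) /\
      V = (fun y => forall W, In W l -> W (h y))) /\ V y)).
  - intros y; split.
    + intros [V [[l [_ [Hsub ->]]] Hy]]; apply Hsub; exact Hy.
    + intros Hy; destruct (HU _ Hy) as [l [Hl [Hin Hsub]]].
      exists (fun y => forall W, In W l -> W (h y)); split; [exists l|]; auto.
  - apply open_union; intros V [l [Hl [_ ->]]].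
    apply (@open_finite_inter Y _ S (fun W y => W (h y))); auto.
Qed.

Lemma gen_open_subbasic (T : Type) (S : (T -> Prop) -> Prop) (W : T -> Prop) :
  S W -> gen_open S W.
Proof.
  intros HW x Hx; exists [W]; split; [constructor; auto | split].
  - intros V [<- | []]; exact Hx.
  - intros y Hy; apply Hy; left; reflexivity.
Qed.

Lemma open_fst (X : OTS) (U : X -> Prop) :
  open U -> @open (prod_OTS X two) (fun p => U (fst p)).
Proof. intros HU; apply gen_open_subbasic; left; exists U; auto. Qed.

Lemma open_snd (X : OTS) (V : bool -> Prop) :
  @open (prod_OTS X two) (fun p => V (snd p)).
Proof. apply gen_open_subbasic; right; exists V; split; [exact I | reflexivity]. Qed.

Definition bsplit {X : Type} (A B : X -> Prop) (q : X * bool) : Prop :=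
  if snd q then A (fst q) else B (fst q).

Lemma open_bsplit (X : OTS) (A B : X -> Prop) :
  open A -> open B -> @open (prod_OTS X two) (bsplit A B).
Proof.
  intros HA HB.
  apply (@open_ext (prod_OTS X two)
    (fun q => (A (fst q) /\ snd q = true) \/ (B (fst q) /\ snd q = false))).
  - intros [x []]; unfold bsplit; simpl; intuition congruence.
  - apply open_bunion; apply open_inter.
    + apply open_fst; exact HA.
    + apply (open_snd X (fun b => b = true)).
    + apply open_fst; exact HB.
    + apply (open_snd X (fun b => b = false)).
Qed.

Lemma clopen_bsplit (X : OTS) (A B : X -> Prop) :
  clopen A -> clopen B -> @clopen (prod_OTS X two) (bsplit A B).
Proof.
  intros [HA HA'] [HB HB']; split.
  - apply open_bsplit; assumption.
  - apply (@open_ext (prod_OTS X two) (bsplit (fun x => ~ A x) (fun x => ~ B x)));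
      [intros [x []]; reflexivity | apply open_bsplit; assumption].
Qed.

Lemma slice_continuous (X : OTS) (b : bool) :
  continuous X (prod_OTS X two) (fun x => (x, b)).
Proof.
  intro U; apply (@gen_open_preimage X _ _ (fun x : X => (x, b))).
  intros W [[V [HV ->]] | [V [_ ->]]]; [exact HV | apply (open_const X (V b))].
Qed.

Lemma E_le_iff (X : OTS) (a b : E X) :
  bleq a b <-> forall x, proj1_sig a x -> proj1_sig b x.
Proof.
  split.
  - intros Hab x Ha.
    apply (f_equal (fun s : ECar X => proj1_sig s x)) in Hab; simpl in Hab.
    rewrite <- Hab in Ha; apply Ha.
  - intros Hsub; apply sig_pred_eq; simpl; intro x; split; [tauto | auto].
Qed.

Lemma down_bsplit (X : OTS) (A B : X -> Prop) :
  down_set A -> down_set B -> (forall x, A x -> B x) ->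
  @down_set (prod_OTS X two) (bsplit A B).
Proof.
  intros HA HB HAB [x b] [y c] [Hxy Hbc]; simpl in *.
  destruct b, c; unfold bsplit; simpl; eauto.
  discriminate (Hbc eq_refl).
Qed.

Lemma bsplit_clopen_down (X : OTS) (p : Phi (E X)) :
  @clopen_down (prod_OTS X two)
    (bsplit (proj1_sig (fst (proj1_sig p))) (proj1_sig (snd (proj1_sig p)))).
Proof.
  destruct p as [[[A [HA HA']] [B [HB HB']]] Hle]; simpl; split.
  - apply clopen_bsplit; assumption.
  - apply down_bsplit; try assumption.
    apply (proj1 (E_le_iff X _ _) Hle).
Qed.

Definition pair_to_set (X : OTS) (p : Phi (E X)) : E (prod_OTS X two) :=
  exist _ _ (bsplit_clopen_down X p).

Lemma slice_clopen_down (X : OTS) (U : E (prod_OTS X two)) (b : bool) :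
  clopen_down (fun x => proj1_sig U (x, b)).
Proof.
  destruct U as [U [[HU HU'] Hdown]]; simpl; split; [split|].
  - apply (slice_continuous X b U HU).
  - apply (slice_continuous X b (fun q => ~ U q) HU').
  - intros x y Hxy; apply (Hdown (x, b) (y, b)); split; simpl; auto.
Qed.

Definition slice (X : OTS) (U : E (prod_OTS X two)) (b : bool) : E X :=
  exist _ (fun x => proj1_sig U (x, b)) (slice_clopen_down X U b).

(* Since (x,0) <= (x,1), the slice over 1 lies below the slice over 0. *)
Lemma slice_le (X : OTS) (refl : forall x : X, ole x x) (U : E (prod_OTS X two)) :
  bleq (slice X U true) (slice X U false).
Proof.
  destruct U as [V [HV Hdown]]; apply E_le_iff; intro x; simpl.
  apply (Hdown (x, false) (x, true)); split; simpl; [apply refl | discriminate].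
Qed.

Definition set_to_pair (X : OTS) (refl : forall x : X, ole x x)
  (U : E (prod_OTS X two)) : Phi (E X) :=
  exist _ (slice X U true, slice X U false) (slice_le X refl U).

Lemma part1 (X : OTS) : priestley X -> bl_iso (Phi (E X)) (E (prod_OTS X two)).
Proof.
  intros [[refl _] _].
  exists (pair_to_set X), (set_to_pair X refl).
  repeat split.
  - intros [[[A HA] [B HB]] Hle]; apply phi_eq; simpl.
    f_equal; apply sig_pred_eq; reflexivity.
  - intro U; apply sig_pred_eq; intros [x []]; reflexivity.
  - intros [[[A HA] [B HB]] H] [[[C HC] [D HD]] K].
    apply sig_pred_eq; intros [x []]; reflexivity.
  - intros [[[A HA] [B HB]] H] [[[C HC] [D HD]] K].
    apply sig_pred_eq; intros [x []]; reflexivity.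
  - apply sig_pred_eq; intros [x []]; reflexivity.
  - apply sig_pred_eq; intros [x []]; reflexivity.
Qed.

Definition PI (L : BDL) : Type := {I : L -> Prop | prime_ideal I}.

Lemma open_Xspec_subbasic (L : BDL) (a : L) :
  @open (Xspec L) (fun I => proj1_sig I a) /\
  @open (Xspec L) (fun I => ~ proj1_sig I a).
Proof. split; apply gen_open_subbasic; exists a; auto. Qed.

Definition decide (Q : Prop) : bool :=
  if excluded_middle_informative Q then true else false.

Lemma open_decide (Y : OTS) (S : Y -> Prop) (V : bool -> Prop) :
  open S -> open (fun y => ~ S y) -> open (fun y => V (decide (S y))).
Proof.
  intros HS HS'.
  apply (@open_ext Y (fun y => (V true /\ S y) \/ (V false /\ ~ S y))).
  - intro y; unfold decide; destruct excluded_middle_informative; tauto.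
  - apply open_bunion; apply open_inter; auto using open_const.
Qed.

Lemma join_top (L : BDL) (a : L) : join a top = top.
Proof.
  transitivity (join top (meet top a)).
  - rewrite (meetC top a), meet_top; apply joinC.
  - apply absorb2.
Qed.

Lemma meet_bot (L : BDL) (a : L) : meet a bot = bot.
Proof.
  transitivity (meet bot (join bot a)).
  - rewrite (joinC bot a), join_bot; apply meetC.
  - apply absorb1.
Qed.

(* The coordinate projections Phi(L) -> L indexed by a point of 2:
   true selects the lower coordinate, false the upper one.  Each is a
   bounded lattice homomorphism (definitionally). *)
Definition pr (L : BDL) (b : bool) (p : Phi L) : L :=
  if b then fst (proj1_sig p) else snd (proj1_sig p).

Lemma Phi_le_iff (L : BDL) (p q : Phi L) :
  bleq p q <-> forall b, bleq (pr L b p) (pr L b q).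
Proof.
  destruct p as [[a1 a2] Hp], q as [[c1 c2] Hq]; split.
  - intros Hpq b; apply (f_equal (@proj1_sig _ _)) in Hpq; simpl in Hpq.
    injection Hpq as H1 H2; destruct b; assumption.
  - intros H; apply phi_eq; simpl.
    pose proof (H true) as H1; pose proof (H false) as H2; simpl in H1, H2.
    rewrite H1, H2; reflexivity.
Qed.

Lemma proj_prime (L : BDL) (I : L -> Prop) (b : bool) :
  prime_ideal I -> prime_ideal (fun p : Phi L => I (pr L b p)).
Proof.
  intros [H0 [Hdown [Hjoin [Htop Hmeet]]]]; split; [|split; [|split; [|split]]].
  - destruct b; exact H0.
  - intros p q Hpq; apply Hdown, (proj1 (Phi_le_iff L p q) Hpq).
  - intros [[a1 a2] Hp] [[c1 c2] Hq]; destruct b; apply Hjoin.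
  - destruct b; exact Htop.
  - intros [[a1 a2] Hp] [[c1 c2] Hq]; destruct b; apply Hmeet.
Qed.

Definition proj_ideal (L : BDL) (y : PI L * bool) : PI (Phi L) :=
  exist _ _ (proj_prime L (proj1_sig (fst y)) (snd y) (proj2_sig (fst y))).

Definition diag (L : BDL) (a : L) : Phi L := exist _ (a, a) (meet_idem L a).

Definition bot_top (L : BDL) : Phi L := exist _ (bot, top) (meet_top bot).

Lemma diag_prime (L : BDL) (P : Phi L -> Prop) :
  prime_ideal P -> prime_ideal (fun a => P (diag L a)).
Proof.
  intros [H0 [Hdown [Hjoin [Htop Hmeet]]]]; split; [|split; [|split; [|split]]].
  - exact H0.
  - intros a c Hac; apply Hdown, Phi_le_iff; intros []; exact Hac.
  - intros a c Ha Hc.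
    replace (diag L (join a c)) with (join (diag L a) (diag L c));
      [apply Hjoin; assumption | apply phi_eq; reflexivity].
  - exact Htop.
  - intros a c Hac; apply Hmeet.
    replace (meet (diag L a) (diag L c)) with (diag L (meet a c));
      [exact Hac | apply phi_eq; reflexivity].
Qed.

Definition diag_ideal (L : BDL) (P : PI (Phi L)) : PI L :=
  exist _ _ (diag_prime L _ (proj2_sig P)).

Definition split_ideal (L : BDL) (P : PI (Phi L)) : PI L * bool :=
  (diag_ideal L P, decide (proj1_sig P (bot_top L))).

(* Classification of prime ideals of Phi(L): P is the projection of its
   diagonal, on the lower coordinate iff (0,1) lies in P.  If (0,1) is in P
   then (a,b) <= (a,a) v (0,1); otherwise (b,b) ^ (0,1) <= (a,b) and
   primeness excludes (0,1). *)
Lemma prime_Phi_is_proj (L : BDL) (P : Phi L -> Prop) : prime_ideal P ->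
  forall p, P p <-> P (diag L (pr L (decide (P (bot_top L))) p)).
Proof.
  intros [H0 [Hdown [Hjoin [Htop Hmeet]]]] [[c1 c2] Hc].
  unfold decide; destruct excluded_middle_informative as [Hbt | Hbt]; simpl; split.
  - apply Hdown, Phi_le_iff; intros []; simpl; [apply meet_idem | exact Hc].
  - intros H; apply (Hdown _ (join (diag L c1) (bot_top L))); [|apply Hjoin; assumption].
    apply Phi_le_iff; intros []; simpl.
    + rewrite join_bot; apply meet_idem.
    + rewrite join_top; apply meet_top.
  - intros H; destruct (Hmeet (diag L c2) (bot_top L)) as [H' | H'];
      [|exact H' | contradiction].
    apply (Hdown _ (exist _ (c1, c2) Hc)); [|exact H].
    apply Phi_le_iff; intros []; simpl.
    + unfold bleq; rewrite meet_bot, meetC; apply meet_bot.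
    + unfold bleq; rewrite meet_top; apply meet_idem.
  - apply Hdown, Phi_le_iff; intros []; simpl; [exact Hc | apply meet_idem].
Qed.

Lemma proj_split (L : BDL) (P : PI (Phi L)) : proj_ideal L (split_ideal L P) = P.
Proof.
  apply sig_pred_eq; intro p; symmetry.
  apply (prime_Phi_is_proj L _ (proj2_sig P)).
Qed.

Lemma split_proj (L : BDL) (y : PI L * bool) : split_ideal L (proj_ideal L y) = y.
Proof.
  destruct y as [[I HI] b]; pose proof HI as [H0 [_ [_ [Htop _]]]].
  unfold split_ideal; f_equal.
  - apply sig_pred_eq; intro a; destruct b; reflexivity.
  - destruct b; simpl; unfold decide;
      destruct excluded_middle_informative; first [reflexivity | contradiction].
Qed.

Lemma proj_ideal_le_iff (L : BDL) (y y' : PI L * bool) :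
  (forall p, proj1_sig (proj_ideal L y) p -> proj1_sig (proj_ideal L y') p) <->
  ((forall a, proj1_sig (fst y) a -> proj1_sig (fst y') a) /\
   (snd y = true -> snd y' = true)).
Proof.
  destruct y as [[I HI] b], y' as [[J HJ] b']; simpl.
  pose proof HI as [H0 _]; pose proof HJ as [_ [Jdown [_ [Jtop _]]]].
  split.
  - intros H; split.
    + intros a Ha; specialize (H (diag L a)); destruct b, b'; apply H; exact Ha.
    + intros ->; destruct b'; [reflexivity|].
      exfalso; apply Jtop, (H (bot_top L)); exact H0.
  - intros [Hsub Hb] [[c1 c2] Hc]; destruct b, b'; simpl; auto.
    + discriminate (Hb eq_refl).
    + intros Hc2; apply (Jdown _ c2); auto.
Qed.

(* Preimages of subbasic sets of X(Phi(L)) under proj_ideal are defined by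
   cases on the second coordinate. *)
Lemma proj_ideal_continuous (L : BDL) :
  continuous (prod_OTS (Xspec L) two) (Xspec (Phi L)) (proj_ideal L).
Proof.
  intros U; apply gen_open_preimage; intros W [c [-> | ->]].
  - apply (@open_ext (prod_OTS (Xspec L) two)
      (bsplit (fun I : PI L => ~ proj1_sig I (fst (proj1_sig c)))
              (fun I : PI L => ~ proj1_sig I (snd (proj1_sig c)))));
      [intros [I []]; reflexivity | apply open_bsplit; apply open_Xspec_subbasic].
  - apply (@open_ext (prod_OTS (Xspec L) two)
      (bsplit (fun I : PI L => proj1_sig I (fst (proj1_sig c)))
              (fun I : PI L => proj1_sig I (snd (proj1_sig c)))));
      [intros [I []]; reflexivity | apply open_bsplit; apply open_Xspec_subbasic].
Qed.

(* The first component of split_ideal pulls subbasic sets back to subbasic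
   sets; the second is decided by the clopen set {P | (0,1) in P}. *)
Lemma split_ideal_continuous (L : BDL) :
  continuous (Xspec (Phi L)) (prod_OTS (Xspec L) two) (split_ideal L).
Proof.
  intros U; apply gen_open_preimage; intros W [[V [HV ->]] | [V [_ ->]]]; simpl.
  - refine (@gen_open_preimage (Xspec (Phi L)) (PI L) _ (diag_ideal L) _ V HV).
    intros W [a [-> | ->]]; apply gen_open_subbasic; exists (diag L a); auto.
  - apply (open_decide (Xspec (Phi L)) (fun P : PI (Phi L) => proj1_sig P (bot_top L)));
      apply gen_open_subbasic; exists (bot_top L); auto.
Qed.

Lemma part2 (L : BDL) : ots_iso (Xspec (Phi L)) (prod_OTS (Xspec L) two).
Proof.
  exists (split_ideal L), (proj_ideal L).
  split; [exact (proj_split L) | split; [exact (split_proj L) | split]].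
  - intros P P'.
    pose proof (proj_ideal_le_iff L (split_ideal L P) (split_ideal L P')) as Hle.
    rewrite !proj_split in Hle; exact Hle.
  - intros U; split; intro HU.
    + exact (proj_ideal_continuous L U HU).
    + apply (@open_ext (Xspec (Phi L)) (fun P => U (proj_ideal L (split_ideal L P))));
        [intro P; rewrite proj_split; reflexivity|].
      exact (split_ideal_continuous L _ HU).
Qed.

Theorem lemma4 :
  (forall X : OTS, priestley X -> bl_iso (Phi (E X)) (E (prod_OTS X two))) /\
  (forall L : BDL, ots_iso (Xspec (Phi L)) (prod_OTS (Xspec L) two)).
Proof. split; [exact part1 | exact part2]. Qed.
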